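(* Let $p\ge2$ and $c>0$ be such that $N_p^c$ exists, and suppose that for every $c'\in(0,c]$ the set $N_p^{c'}$ has the star property: for every $x\in N_p^{c'}$ and every $\lambda\in[0,1)$, $\lambda x\in\mathrm{Int}(N_p^{c'})$. Then $V_p$ is radially increasing on $N_p^c$: for every $x\in N_p^c\setminus\{0\}$ and all $0\le\lambda_1<\lambda_2\le1$, $V_p(\lambda_1x)<V_p(\lambda_2 x)$.
   Context: Let $f:\mathbb{R}^n\to\mathbb{R}^n$ be real-analytic with $f(0)=0$, and assume all eigenvalues of $A=\frac{\partial f}{\partial x}(0)$ have negative real parts. $\|\cdot\|$ is the Euclidean norm. Let $V$ be the real-analytic function on a neighborhood of $0$ with $\langle\nabla V(x),f(x)\rangle=-\|x\|^2$, $V(0)=0$, and for $p\ge 2$ let $V_p$ be the Taylor polynomial of $V$ at $0$ of degree $p$ (terms of degrees $2,\dots,p$). Let $G_p$ be the maximal domain (connected open set) containing $0$ such that $V_p(x)>0$ and $\langle\nabla V_p(x),f(x)\rangle<0$ for all $x\in G_p\setminus\{0\}$. A closed connected set $S\subset\mathbb{R}^n$ is called $(p,c)$-admissible if: $0\in\mathrm{Int}(S)$; $V_p(x)<c$ for all $x\in\mathrm{Int}(S)$; $V_p(x)=c$ for all $x\in\partial S$; and $S$ is compact with $S\subset G_p$. For given $p,c$ there is at most one such set; when it exists it is denoted $N_p^c$. *)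

From HB Require Import structures.
From mathcomp Require Import all_boot all_order all_algebra.
From mathcomp Require Import all_classical all_reals all_analysis.
From mathcomp Require Import complex.

Set Implicit Arguments.
Unset Strict Implicit.
Unset Printing Implicit Defensive.

Import Order.TTheory GRing.Theory Num.Theory.
Import numFieldNormedType.Exports.
Local Open Scope classical_set_scope.
Local Open Scope ring_scope.

Section Defs.
Variable R : realType.
Variable n : nat.

(* Squared Euclidean norm  ||x||^2 = sum_i x_i^2  (the library norm on
   'rV_n is the max norm, so we write the Euclidean one explicitly). *)
Definition sqnorm (x : 'rV[R]_n) : R := \sum_(i < n) x 0 i ^+ 2.

(* Multi-indices alpha : 'I_n -> nat of total degree k are encoded as
   a : {ffun 'I_n -> 'I_k.+1} with \sum_i a i = k. *)
Definition homog_part (k : nat) (c : {ffun 'I_n -> 'I_k.+1} -> R)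
    (h : 'rV[R]_n) : R :=
  \sum_(a : {ffun 'I_n -> 'I_k.+1} | (\sum_(i < n) (a i : nat))%N == k)
     c a * \prod_(i < n) h 0 i ^+ a i.

Definition abs_homog_part (k : nat) (c : {ffun 'I_n -> 'I_k.+1} -> R)
    (r : R) : R :=
  \sum_(a : {ffun 'I_n -> 'I_k.+1} | (\sum_(i < n) (a i : nat))%N == k)
     `|c a| * r ^+ k.

(* g is real-analytic at x0: near x0 it is the sum of a power series
   sum_alpha c_alpha (x - x0)^alpha that converges absolutely on a
   polydisc of radius r > 0 (terms grouped by total degree). *)
Definition analytic_at (g : 'rV[R]_n -> R) (x0 : 'rV[R]_n) : Prop :=
  exists (c : forall k : nat, {ffun 'I_n -> 'I_k.+1} -> R) (r : R),
    [/\ 0 < r,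
        (exists l : R, series (fun k => abs_homog_part (c k) r) @ \oo --> l) &
        forall h : 'rV[R]_n, (forall i, `|h 0 i| < r) ->
          series (fun k => homog_part (c k) h) @ \oo --> g (x0 + h)].

Definition analytic_on (g : 'rV[R]_n -> R) (U : set 'rV[R]_n) : Prop :=
  forall x, U x -> analytic_at g x.

Definition hurwitz (A : 'M[R]_n) : Prop :=
  forall z : R[i],
    root (map_poly (fun x : R => Complex x 0) (char_poly A)) z -> Re z < 0.

(* Taylor polynomial of V at 0 of degree p, terms of degrees 2..p:
   the degree-k homogeneous part of the Taylor expansion is
   (1/k!) d^k/dt^k V(t x) |_{t=0}. *)
Definition taylor_pol (V : 'rV[R]_n -> R) (p : nat) (x : 'rV[R]_n) : R :=
  \sum_(2 <= k < p.+1)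
     (derive1n k (fun t : R => V (t *: x)) 0) / (k`!)%:R.

(* <grad W(x), f(x)> written as the differential of W at x applied to f x. *)
Definition lie_deriv (f : 'rV[R]_n -> 'rV[R]_n) (W : 'rV[R]_n -> R)
    (x : 'rV[R]_n) : R := 'd W x (f x).

(* G_p: the maximal domain (connected open set) containing 0 on which
   W > 0 and <grad W, f> < 0 away from 0 = union of all such domains. *)
Definition Gdom (f : 'rV[R]_n -> 'rV[R]_n) (W : 'rV[R]_n -> R)
    : set 'rV[R]_n :=
  [set x | exists S : set 'rV[R]_n,
     [/\ open S, connected S, S 0,
         (forall y, S y -> y != 0 -> 0 < W y /\ lie_deriv f W y < 0)
       & S x]].

Definition boundary (S : set 'rV[R]_n) : set 'rV[R]_n :=
  closure S `\` interior S.

Definition admissible (f : 'rV[R]_n -> 'rV[R]_n) (W : 'rV[R]_n -> R)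
    (c : R) (S : set 'rV[R]_n) : Prop :=
  [/\ closed S, connected S & interior S 0] /\
  [/\ (forall x, interior S x -> W x < c),
      (forall x, boundary S x -> W x = c),
      compact S & S `<=` Gdom f W].

Definition star_property (S : set 'rV[R]_n) : Prop :=
  forall x, S x -> forall l : R, 0 <= l -> l < 1 -> interior S (l *: x).

End Defs.

From HB Require Import structures.
From mathcomp Require Import all_boot all_order all_algebra.
From mathcomp Require Import all_classical all_reals all_analysis.
From mathcomp Require Import complex.
From mathcomp Require Import ring lra.
Import Order.TTheory GRing.Theory Num.Theory.
Import numFieldNormedType.Exports.
Local Open Scope classical_set_scope.
Local Open Scope ring_scope.

Set Implicit Arguments.
Unset Strict Implicit.
Unset Printing Implicit Defensive.

(* [V_p] is a polynomial, hence differentiable with a locally uniform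
   quadratic Taylor remainder; this and [<grad V_p, f> < 0] away from [0] are
   all that is used.  Admissible sets are then compared by continuity and
   connectedness: [N_p^c] is contained in the star admissible set of level [c],
   and [l2 x] lies in the star admissible set of level [V_p (l2 x)], whose star
   property puts [l1 x] in its interior, where [V_p] is smaller. *)

Section TaylorBounded.
Context {R : realType} {V : normedModType R}.

Definition taylor_bounded (P : V -> R) : Prop :=
  (forall y, differentiable P y) /\
  forall M : R, 0 < M -> exists2 K : R, 0 < K &
    forall y z : V, `|y| <= M -> `|z| <= M ->
      [/\ `|P y| <= K, `|'d P y z| <= K * `|z|
        & `|P (y + z) - P y - 'd P y z| <= K * `|z| ^+ 2].

Lemma taylor_bounded_cst (a : R) : taylor_bounded (fun _ => a).
Proof.
split=> [y|M M0]; first exact: differentiable_cst.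
exists (`|a| + 1) => [|y z _ _]; first by rewrite ltr_pwDr.
rewrite diff_cst /= subrr subr0 normr0; split.
- by rewrite lerDl.
- by rewrite mulr_ge0 ?addr_ge0.
- by rewrite mulr_ge0 ?exprn_ge0 ?addr_ge0.
Qed.

Lemma taylor_boundedD (P Q : V -> R) :
  taylor_bounded P -> taylor_bounded Q -> taylor_bounded (fun y => P y + Q y).
Proof.
move=> [dP bP] [dQ bQ]; split=> [y|M M0]; first exact: differentiableD.
have [K1 K1_gt0 HP] := bP M M0; have [K2 K2_gt0 HQ] := bQ M M0.
exists (K1 + K2) => [|y z yM zM]; first by rewrite addr_gt0.
have [P1 P2 P3] := HP y z yM zM; have [Q1 Q2 Q3] := HQ y z yM zM.
rewrite (diffD (dP y) (dQ y)) /= !mulrDl; split.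
- by rewrite (le_trans (ler_normD _ _)) ?lerD.
- by rewrite (le_trans (ler_normD _ _)) ?lerD.
- rewrite (_ : _ - _ - _ = (P (y + z) - P y - 'd P y z)
                         + (Q (y + z) - Q y - 'd Q y z)); last by ring.
  by rewrite (le_trans (ler_normD _ _)) ?lerD.
Qed.

Lemma taylor_boundedM (P Q : V -> R) :
  taylor_bounded P -> taylor_bounded Q -> taylor_bounded (fun y => P y * Q y).
Proof.
move=> [dP bP] [dQ bQ]; split=> [y|M M0]; first exact: differentiableM.
have M2_gt0 : 0 < M *+ 2 by rewrite mulrn_wgt0.
have [K1 K1_gt0 HP] := bP _ M2_gt0; have [K2 K2_gt0 HQ] := bQ _ M2_gt0.
exists (K1 * K2 * (M + 3)) => [|y z yM zM]; first by rewrite !mulr_gt0 ?addr_gt0.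
have le_M2 (u : V) : `|u| <= M -> `|u| <= M *+ 2.
  by move=> uM; rewrite mulr2n; exact: ler_wpDl (ltW M0) uM.
have yzM2 : `|y + z| <= M *+ 2 by rewrite mulr2n (le_trans (ler_normD _ _)) ?lerD.
have [P1 P2 P3] := HP y z (le_M2 y yM) (le_M2 z zM).
have [Q1 Q2 Q3] := HQ y z (le_M2 y yM) (le_M2 z zM).
have [Q1' _ _] := HQ (y + z) z yzM2 (le_M2 z zM).
rewrite (diffM (dP y) (dQ y)) /=.
move: P1 P2 P3 Q1 Q2 Q3 Q1'.
set a := P y; set da := 'd P y z; set ra := P (y + z) - a - da.
set b := Q y; set db := 'd Q y z; set rb := Q (y + z) - b - db.
set b' := Q (y + z); set t := `|z|.
move=> P1 P2 P3 Q1 Q2 Q3 Q1'.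
have t_ge0 : 0 <= t := normr_ge0 z.
have K12_ge0 : 0 <= K1 * K2 by rewrite mulr_ge0 ?ltW.
have ->: P (y + z) * b' - a * b - (a * db + b * da) = a * rb + da * (db + rb) + ra * b'.
  by rewrite /ra /rb /b'; ring.
have K12Mt : K1 * K2 * t * 2 <= K1 * K2 * (M + 3) * t.
  by rewrite mulrAC ler_wpM2r // ler_wpM2l //; lra.
split.
- rewrite normrM (le_trans (ler_pM _ _ P1 Q1)) // ler_peMr //; lra.
- rewrite (le_trans (ler_normD _ _)) // !normrM (le_trans _ K12Mt) //.
  have -> : K1 * K2 * t * 2 = K1 * (K2 * t) + K2 * (K1 * t) by ring.
  by rewrite lerD // ler_pM.
- have db_rb : `|db + rb| <= K2 * t + K2 * t ^+ 2.
    by rewrite (le_trans (ler_normD _ _)) ?lerD.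
  rewrite (le_trans (ler_normD _ _)) // (le_trans (lerD (ler_normD _ _) (lexx _))) //.
  rewrite !normrM.
  apply: le_trans (lerD (lerD (ler_pM (normr_ge0 _) (normr_ge0 _) P1 Q3)
    (ler_pM (normr_ge0 _) (normr_ge0 _) P2 db_rb))
    (ler_pM (normr_ge0 _) (normr_ge0 _) P3 Q1')) _.
  have -> : K1 * (K2 * t ^+ 2) + K1 * t * (K2 * t + K2 * t ^+ 2) + K1 * t ^+ 2 * K2
          = K1 * K2 * t ^+ 2 * (t + 3) by ring.
  have t3M : t + 3 <= M + 3 by rewrite lerD2r.
  rewrite [_ * (M + 3) * _]mulrAC; apply: ler_wpM2l t3M.
  by rewrite mulr_ge0 ?exprn_ge0.
Qed.

Lemma eq_taylor_bounded (P Q : V -> R) :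
  P =1 Q -> taylor_bounded P -> taylor_bounded Q.
Proof. by move=> /funext ->. Qed.

Lemma taylor_bounded_sum (I : Type) (s : seq I) (Pr : pred I) (F : I -> V -> R) :
  (forall i, taylor_bounded (F i)) ->
  taylor_bounded (fun y => \sum_(i <- s | Pr i) F i y).
Proof.
move=> hF; elim: s => [|i s IH].
  by apply: (eq_taylor_bounded _ (taylor_bounded_cst 0)) => y; rewrite big_nil.
case Pi: (Pr i).
  by apply: (eq_taylor_bounded _ (taylor_boundedD (hF i) IH)) => y; rewrite big_cons Pi.
by apply: (eq_taylor_bounded _ IH) => y; rewrite big_cons Pi.
Qed.

Lemma taylor_bounded_prod (I : Type) (s : seq I) (Pr : pred I) (F : I -> V -> R) :
  (forall i, taylor_bounded (F i)) ->
  taylor_bounded (fun y => \prod_(i <- s | Pr i) F i y).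
Proof.
move=> hF; elim: s => [|i s IH].
  by apply: (eq_taylor_bounded _ (taylor_bounded_cst 1)) => y; rewrite big_nil.
case Pi: (Pr i).
  by apply: (eq_taylor_bounded _ (taylor_boundedM (hF i) IH)) => y; rewrite big_cons Pi.
by apply: (eq_taylor_bounded _ IH) => y; rewrite big_cons Pi.
Qed.

Lemma taylor_boundedX (P : V -> R) k :
  taylor_bounded P -> taylor_bounded (fun y => P y ^+ k).
Proof.
move=> hP; elim: k => [|k IH].
  by apply: (eq_taylor_bounded _ (taylor_bounded_cst 1)) => y; rewrite expr0.
by apply: (eq_taylor_bounded _ (taylor_boundedM hP IH)) => y; rewrite exprS.
Qed.

End TaylorBounded.

Section TaylorBoundedDescent.
Context {R : realType} {V : normedModType R}.
Variable W : V -> R.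
Hypothesis W_tb : taylor_bounded W.

(* Compare the expansions of [W] at [y] along [t v] and at [q] along
   [y - q + t v], with [t = |y - q|]. *)
Lemma taylor_bounded_diff_lipschitz (v : V) (M : R) : 0 < M ->
  exists2 C : R, 0 < C & forall y q : V, `|y| <= M -> `|q| <= M ->
    `|'d W y v - 'd W q v| <= C * `|y - q|.
Proof.
move=> M_gt0; set M' := M + M *+ 2 * (1 + `|v|).
have v1_ge0 : 0 <= 1 + `|v| by rewrite addr_ge0.
have M2M' : M *+ 2 <= M'.
  by rewrite /M' mulr2n; have := mulr_ge0 (ltW M_gt0) (normr_ge0 v); nra.
have M'_gt0 : 0 < M' by apply: lt_le_trans M2M'; rewrite mulrn_wgt0.
have [K K_gt0 HK] := W_tb.2 M' M'_gt0.
exists (K * ((1 + `|v|) ^+ 2 + `|v| ^+ 2 + 1)) => [|y q yM qM].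
  by rewrite mulr_gt0 // ltr_wpDl // addr_ge0 ?exprn_ge0.
have [->|yq] := eqVneq y q; first by rewrite !subrr !normr0 mulr0.
set w := y - q; set t := `|w|.
have t_gt0 : 0 < t by rewrite normr_gt0 subr_eq0.
have t_ge0 := ltW t_gt0.
have t2M : t <= M *+ 2 by rewrite mulr2n (le_trans (ler_normB _ _)) ?lerD.
have tvM' : t * (1 + `|v|) <= M'.
  apply: le_trans (ler_wpM2r v1_ge0 t2M) _.
  by apply: ler_wpDl; [exact: ltW | exact: lexx].
have wtv : `|w + t *: v| <= t * (1 + `|v|).
  by rewrite (le_trans (ler_normD _ _)) // normrZ (ger0_norm t_ge0) mulrDr mulr1.
have le_M' (u : V) : `|u| <= M -> `|u| <= M'.
  by move=> uM; apply: le_trans M2M'; rewrite mulr2n; apply: ler_wpDl (ltW M_gt0) uM.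
have tv : `|t *: v| <= M'.
  rewrite normrZ (ger0_norm t_ge0) (le_trans _ tvM') // ler_wpM2l //.
  by rewrite lerDr.
have [_ _ E1] := HK y (t *: v) (le_M' _ yM) tv.
have [_ _ E2] := HK q (w + t *: v) (le_M' _ qM) (le_trans wtv tvM').
have [_ _ E3] := HK q w (le_M' _ qM) (le_trans t2M M2M').
have qw : q + w = y by rewrite addrC subrK.
rewrite linearZ /= normrZ (ger0_norm t_ge0) in E1.
rewrite addrA qw linearD linearZ /= in E2; rewrite qw -/t in E3.
have E2' : `|W (y + t *: v) - W q - ('d W q w + t * 'd W q v)|
    <= K * (t * (1 + `|v|)) ^+ 2.
  apply: le_trans E2 (ler_wpM2l (ltW K_gt0) _).
  by rewrite !expr2; apply: ler_pM; rewrite ?normr_ge0.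
have key : `|t * ('d W y v - 'd W q v)|
    <= K * (t * (1 + `|v|)) ^+ 2 + K * (t * `|v|) ^+ 2 + K * t ^+ 2.
  have -> : t * ('d W y v - 'd W q v) =
      (W (y + t *: v) - W q - ('d W q w + t * 'd W q v))
      - (W (y + t *: v) - W y - t * 'd W y v) - (W y - W q - 'd W q w) by ring.
  apply: le_trans (ler_normB _ _) _; apply: lerD E3.
  by apply: le_trans (ler_normB _ _) _; exact: lerD E2' E1.
move: key; rewrite normrM (ger0_norm t_ge0).
have -> : K * (t * (1 + `|v|)) ^+ 2 + K * (t * `|v|) ^+ 2 + K * t ^+ 2
    = t * (K * ((1 + `|v|) ^+ 2 + `|v| ^+ 2 + 1) * t) by ring.
by rewrite ler_pM2l.
Qed.

Lemma taylor_bounded_descent (q v : V) : 'd W q v < 0 ->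
  exists eta s beta : R, [/\ 0 < eta, 0 < s, 0 < beta &
    forall y u, `|y - q| < eta -> 0 <= u -> u <= s ->
      W (y + u *: v) <= W y - u * beta].
Proof.
move=> dWqv_lt0; set b := - 'd W q v.
have b_gt0 : 0 < b by rewrite oppr_gt0.
have dWqv : 'd W q v = - b by rewrite opprK.
set M := `|q| + `|v| + 1.
have M_gt0 : 0 < M by rewrite ltr_wpDl ?addr_ge0.
have [C C_gt0 HC] := taylor_bounded_diff_lipschitz v M_gt0.
have [K K_gt0 HK] := W_tb.2 M M_gt0.
set k := K * `|v| ^+ 2 + 1.
have k_gt0 : 0 < k by apply: (ltr_wpDl _ ltr01); rewrite mulr_ge0 ?exprn_ge0 // ltW.
set eta := Num.min 1 (b / 2 / C); set s := Num.min 1 (b / 4 / k).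
have eta_gt0 : 0 < eta by rewrite lt_min ltr01 !divr_gt0.
have s_gt0 : 0 < s by rewrite lt_min ltr01 !divr_gt0.
exists eta, s, (b / 4); split=> //; first by rewrite divr_gt0.
move=> y u yq u_ge0 us.
have eta1 : eta <= 1 by rewrite ge_min lexx.
have u1 : u <= 1 by rewrite (le_trans us) // ge_min lexx.
have yM : `|y| <= M.
  rewrite -(subrK q y) (le_trans (ler_normD _ _)) // addrC /M -addrA lerD2l.
  by rewrite (le_trans (ltW (lt_le_trans yq eta1))) // lerDr.
have qM : `|q| <= M by rewrite /M -addrA lerDl addr_ge0.
have uvM : `|u *: v| <= M.
  rewrite normrZ ger0_norm // (le_trans (ler_piMl _ u1)) //.
  by rewrite /M addrAC lerDr addr_ge0.
have dWyv : 'd W y v <= - (b / 2).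
  have : C * `|y - q| <= b / 2.
    rewrite mulrC -ler_pdivlMr //; apply: ltW (lt_le_trans yq _).
    by rewrite ge_min lexx orbT.
  have := HC y q yM qM; rewrite ler_norml => /andP[_]; lra.
have [_ _ E] := HK y (u *: v) yM uvM.
rewrite linearZ /= normrZ ger0_norm // exprMn ler_norml in E.
have uk : u * k <= b / 4 by rewrite -ler_pdivlMr // (le_trans us) // ge_min lexx orbT.
have uKv : K * (u ^+ 2 * `|v| ^+ 2) <= u * (b / 4).
  have -> : K * (u ^+ 2 * `|v| ^+ 2) = u * (u * (k - 1)) by rewrite /k; ring.
  apply: (ler_wpM2l u_ge0); apply: le_trans uk; apply: (ler_wpM2l u_ge0); lra.
move: E => /andP[_ E].
have E' : W (y + u *: v) - W y - u * 'd W y v <= K * (u ^+ 2 * `|v| ^+ 2) := E.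
have := ler_wpM2l u_ge0 dWyv; lra.
Qed.

End TaylorBoundedDescent.

Section LocalMinimum.
Context {R : realType} {V : normedModType R}.

Lemma diff_local_min (W : V -> R) (m v : V) (e : R) :
  (forall y, differentiable W y) -> 0 < e ->
  (forall z, `|m - z| < e -> W m <= W z) -> 'd W m v = 0.
Proof.
move=> W_diff e_gt0 m_min; pose g t := W (m + t *: v).
have g_shift t : (fun h : R => h^-1 *: ((g \o shift t) (h *: 1) - g t)) =
    (fun h => h^-1 *: ((W \o shift (m + t *: v)) (h *: v) - W (m + t *: v))).
  by apply/funext => h; rewrite /g /= -[h *: 1]/(h * 1) mulr1 scalerDl addrCA.
have g_derivable t : derivable g t 1.
  by rewrite /derivable g_shift; exact: diff_derivable.
set d := e / (`|v| + 1).
have d_gt0 : 0 < d by rewrite divr_gt0 // ltr_wpDl.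
have : is_derive (0 : R) (1 : R) g 0.
  apply: (@derive1_at_min _ g (- d) d).
  - lra.
  - by move=> t _; exact: g_derivable.
  - by rewrite in_itv /= oppr_lt0 d_gt0.
  move=> t; rewrite in_itv /= => /andP[dt td]; rewrite /g scale0r addr0; apply: m_min.
  rewrite opprD addNKr normrN normrZ.
  have : `|t| < d by rewrite ltr_norml dt td.
  rewrite ltr_pdivlMr ?ltr_wpDl // => /(le_lt_trans _); apply.
  by rewrite ler_wpM2l // lerDl.
case=> _; rewrite /derive g_shift scale0r addr0 => dWm.
by rewrite -(@deriveE _ _ _ W m v (W_diff m)).
Qed.

Lemma closed_ray_mem (A : set V) (h v : V) (s : R) : closed A -> 0 < s ->
  (forall u, 0 < u -> u <= s -> A (h + u *: v)) -> A h.
Proof.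
move=> A_closed s_gt0 hA; rewrite ((closure_id A).1 A_closed).
move=> B /nbhs_ballP[e e_gt0 he].
set u := Num.min s (e / (`|v| + 1)).
have u_gt0 : 0 < u by rewrite lt_min s_gt0 divr_gt0 ?ltr_wpDl.
exists (h + u *: v); split; first by apply: hA; rewrite // ge_min lexx.
apply: he; rewrite -ball_normE /ball_ /= opprD addrA subrr sub0r normrN normrZ.
rewrite (ger0_norm (ltW u_gt0)).
apply: lt_le_trans (_ : u * `|v| < u * (`|v| + 1)) _.
  by rewrite ltr_pM2l // ltrDl.
by rewrite -ler_pdivlMr ?ltr_wpDl // ge_min lexx orbT.
Qed.

End LocalMinimum.

Section RowVectors.
Context {R : realType} {n : nat}.
Local Notation vec := 'rV[R]_n.

Lemma mx_entry_le_norm (y : vec) i : `|y 0 i| <= `|y|.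
Proof. by rewrite [leRHS]mx_normrE; apply/bigmax_geP; right; exists (0, i). Qed.

Lemma diff_coord (i : 'I_n) (y : vec) :
  'd (fun x : vec => x 0 i) y = (fun x : vec => x 0 i) :> (vec -> R).
Proof.
have @f : {linear vec -> R}.
  by exists (fun x : vec => x 0 i); do 2![eexists]; do ?[constructor];
     rewrite ?mxE// => ? *; rewrite ?mxE//; move=> ?; rewrite !mxE.
by rewrite (_ : (fun _ => _) = f) //; apply/diff_lin/coord_continuous.
Qed.

Lemma taylor_bounded_coord (i : 'I_n) : taylor_bounded (fun x : vec => x 0 i).
Proof.
split=> [y|M M_gt0]; first exact: differentiable_coord.
exists (M + 1) => [|y z yM zM]; first by rewrite addr_gt0.
rewrite diff_coord; split.
- by rewrite (le_trans (mx_entry_le_norm _ _)) // ler_wpDr.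
- apply: le_trans (mx_entry_le_norm z i) _; rewrite -[leLHS]mul1r.
  by apply: ler_wpM2r; [exact: normr_ge0 | lra].
- have -> : (y + z) 0 i - y 0 i - z 0 i = 0 by rewrite mxE; ring.
  by rewrite normr0 mulr_ge0 ?exprn_ge0 // addr_ge0 ?ltW.
Qed.

Lemma taylor_bounded_homog_part k (c : {ffun 'I_n -> 'I_k.+1} -> R) :
  taylor_bounded (homog_part c).
Proof.
apply: taylor_bounded_sum => a; apply: taylor_boundedM; first exact: taylor_bounded_cst.
by apply: taylor_bounded_prod => i; apply/taylor_boundedX/taylor_bounded_coord.
Qed.

End RowVectors.

Section PowerSeries.
Context {R : realType}.
Implicit Types (b : R^nat) (K : R).

Definition pseries_abs_cvg b K := cvgn (series (fun m => `|b m| * K ^+ m)).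

Lemma is_cvg_pseries_abs b K : pseries_abs_cvg b `|K| -> cvgn (pseries b K).
Proof.
move=> hK; apply: normed_cvg.
rewrite [X in cvgn X](_ : _ = series (fun m => `|b m| * `|K| ^+ m)) //.
by apply/funext => N; rewrite /series /=; apply: eq_bigr => i _; rewrite normrM normrX.
Qed.

Lemma exprSD_ge K e m : 0 <= K -> 0 <= e ->
  K ^+ m.+1 + m.+1%:R * K ^+ m * e <= (K + e) ^+ m.+1.
Proof.
move=> K_ge0 e_ge0; elim: m => [|m IH]; first by rewrite expr1 expr0 mulr1 mul1r.
rewrite [(K + e) ^+ _]exprS.
apply: le_trans (ler_wpM2l (addr_ge0 K_ge0 e_ge0) IH).
have rest_ge0 : 0 <= m.+1%:R * K ^+ m * e ^+ 2 by rewrite !mulr_ge0 ?exprn_ge0.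
have -> : (K + e) * (K ^+ m.+1 + m.+1%:R * K ^+ m * e) =
    K ^+ m.+2 + m.+2%:R * K ^+ m.+1 * e + m.+1%:R * K ^+ m * e ^+ 2.
  by rewrite !exprS -[m.+2]addn1 natrD; ring.
by rewrite lerDl.
Qed.

Lemma is_cvg_seriesS (u : R^nat) :
  cvgn (series u) -> cvgn (series (fun m => u m.+1)).
Proof.
rewrite -(is_cvg_series_restrict 1) => /cvg_ex[l hl]; apply/cvg_ex; exists l.
rewrite -cvg_shiftS in hl; apply: cvg_trans hl; apply: near_eq_cvg; near=> N.
by rewrite /series /= big_add1 /= big_mkord.
Unshelve. all: by end_near.
Qed.

Lemma pseries_abs_cvg_diffs b K K' :
  pseries_abs_cvg b K' -> 0 <= K -> K < K' -> pseries_abs_cvg (pseries_diffs b) K.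
Proof.
move=> hK' K_ge0 KK'; set e := K' - K.
have e_gt0 : 0 < e by rewrite subr_gt0.
apply: series_le_cvg (is_cvg_seriesZ (k := e^-1) (is_cvg_seriesS hK')) => m /=.
- by rewrite mulr_ge0 ?exprn_ge0.
- change (0 <= e^-1 * (`|b m.+1| * K' ^+ m.+1)).
  apply: mulr_ge0; first by rewrite invr_ge0 ltW.
  by apply: mulr_ge0 => //; apply/exprn_ge0/(le_trans K_ge0)/ltW.
change (`|pseries_diffs b m| * K ^+ m <= e^-1 * (`|b m.+1| * K' ^+ m.+1)).
rewrite /pseries_diffs normrM ger0_norm // mulrAC.
have hb := exprSD_ge m K_ge0 (ltW e_gt0).
rewrite (_ : K + e = K') in hb; last by rewrite /e addrC subrK.
rewrite (mulrC _ `|b m.+1|) (mulrCA e^-1) (mulrC e^-1) ler_wpM2l //.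
by rewrite ler_pdivlMr // (le_trans _ hb) // lerDr exprn_ge0.
Qed.

Lemma pseries_abs_cvg_iter_diffs b rho j :
  (forall K, 0 <= K -> K < rho -> pseries_abs_cvg b K) ->
  forall K, 0 <= K -> K < rho -> pseries_abs_cvg (iter j (@pseries_diffs R) b) K.
Proof.
move=> hb; elim: j => [//|j IH] K K_ge0 K_lt.
rewrite iterS; apply: (@pseries_abs_cvg_diffs _ _ ((K + rho) / 2)) => //.
  by apply: IH; lra.
lra.
Qed.

Lemma is_derive_pseries b rho (t : R) :
  (forall K, 0 <= K -> K < rho -> pseries_abs_cvg b K) -> `|t| < rho ->
  is_derive t (1 : R) (fun x => limn (pseries b x))
    (limn (pseries (pseries_diffs b) t)).
Proof.
move=> hb t_lt; set K := (`|t| + rho) / 2.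
have K_ge0 : 0 <= K by rewrite divr_ge0 // addr_ge0 // (le_trans _ (ltW t_lt)).
have K_lt : K < rho by rewrite /K ltr_pdivrMr // mulrDr mulr1 ltrD2r.
have tK : `|t| < `|K|.
  by rewrite [`|K|]ger0_norm // /K ltr_pdivlMr // mulrDr mulr1 ltrD2l.
have cvgK j : cvgn (pseries (iter j (@pseries_diffs R) b) K).
  apply: is_cvg_pseries_abs; rewrite [`|K|]ger0_norm //.
  exact: pseries_abs_cvg_iter_diffs hb K K_ge0 K_lt.
exact: (pseries_snd_diffs (cvgK 0%N) (cvgK 1%N) (cvgK 2%N) tK).
Qed.

Lemma derive1n_pseries (g : R -> R) b rho :
  (forall K, 0 <= K -> K < rho -> pseries_abs_cvg b K) ->
  (forall t, `|t| < rho -> g t = limn (pseries b t)) ->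
  forall j t, `|t| < rho ->
    (g^`(j))%classic t = limn (pseries (iter j (@pseries_diffs R) b) t).
Proof.
move=> hb hg j; elim: j => [|j IH] t t_lt; first by rewrite derive1n0 hg.
rewrite derive1nS derive1E.
rewrite (@near_eq_derive _ _ _ _
    (fun x => limn (pseries (iter j (@pseries_diffs R) b) x))).
  rewrite iterS.
  by case: (is_derive_pseries (pseries_abs_cvg_iter_diffs (j := j) hb) t_lt).
near=> s; apply: IH; near: s.
exists (rho - `|t|) => /=; first by rewrite subr_gt0.
move=> s /= hs; have -> : s = t + (s - t) by rewrite addrC subrK.
by rewrite (le_lt_trans (ler_normD _ _)) // -ltrBrDl distrC.
Unshelve. all: by end_near.
Qed.

Lemma lim_pseries0 b : limn (pseries b 0) = b 0%N.
Proof.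
apply: lim_near_cst => //; exists 1%N => // -[|N] // _.
rewrite /pseries /series /= big_nat_recl // expr0 mulr1.
by rewrite big1 ?addr0 // => i _; rewrite expr0n mulr0.
Qed.

Lemma iter_pseries_diffs0 b k : iter k (@pseries_diffs R) b 0%N = k`!%:R * b k.
Proof.
elim: k b => [|k IH] b; first by rewrite fact0 mul1r.
by rewrite iterSr IH /pseries_diffs factS natrM; ring.
Qed.

End PowerSeries.

Section HomogeneousParts.
Context {R : realType} {n : nat}.
Local Notation vec := 'rV[R]_n.

Lemma homog_partZ k (c : {ffun 'I_n -> 'I_k.+1} -> R) (t : R) (x : vec) :
  homog_part c (t *: x) = t ^+ k * homog_part c x.
Proof.
rewrite /homog_part mulr_sumr; apply: eq_bigr => a /eqP ha.
rewrite mulrCA; congr (_ * _).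
under eq_bigr do rewrite mxE exprMn.
by rewrite big_split /= prodrXr ha.
Qed.

Lemma norm_homog_part_le k (c : {ffun 'I_n -> 'I_k.+1} -> R) (h : vec) (s : R) :
  0 <= s -> (forall i, `|h 0 i| <= s) -> `|homog_part c h| <= abs_homog_part c s.
Proof.
move=> s_ge0 hs; apply: le_trans (ler_norm_sum _ _ _) _; apply: ler_sum => a /eqP ha.
rewrite normrM ler_wpM2l // normr_prod.
apply: le_trans (_ : \prod_(i < n) s ^+ a i <= _); last by rewrite prodrXr ha.
apply: ler_prod => i _.
by rewrite normr_ge0 normrX lerXn2r // nnegrE (le_trans _ (hs i)).
Qed.

Lemma abs_homog_part_le k (c : {ffun 'I_n -> 'I_k.+1} -> R) (s s' : R) :
  0 <= s -> s <= s' -> abs_homog_part c s <= abs_homog_part c s'.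
Proof.
move=> s_ge0 ss'; apply: ler_sum => a _; rewrite ler_wpM2l //.
by rewrite lerXn2r // nnegrE (le_trans s_ge0).
Qed.

Lemma abs_homog_part_ge0 k (c : {ffun 'I_n -> 'I_k.+1} -> R) (s : R) :
  0 <= s -> 0 <= abs_homog_part c s.
Proof. by move=> s_ge0; apply: sumr_ge0 => a _; rewrite mulr_ge0 ?exprn_ge0. Qed.

Lemma taylor_polE (V : vec -> R) (c : forall k, {ffun 'I_n -> 'I_k.+1} -> R) (r : R) :
  0 < r ->
  (exists l : R, series (fun k => abs_homog_part (c k) r) @ \oo --> l) ->
  (forall h : vec, (forall i, `|h 0 i| < r) ->
     series (fun k => homog_part (c k) h) @ \oo --> V (0 + h)) ->
  forall p x, taylor_pol V p x = \sum_(2 <= k < p.+1) homog_part (c k) x.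
Proof.
move=> r_gt0 [l hl] hV p x.
set b := fun k => homog_part (c k) x; set rho := r / (`|x| + 1).
have x1_gt0 : 0 < `|x| + 1 by rewrite ltr_wpDl.
have scale_lt t : `|t| < rho -> forall i, `|(t *: x) 0 i| < r.
  move=> t_lt i; rewrite mxE normrM.
  apply: le_lt_trans (ler_wpM2l (normr_ge0 t) (mx_entry_le_norm x i)) _.
  apply: le_lt_trans (ler_wpM2l (normr_ge0 t) (ler_wpDr ler01 (lexx `|x|))) _.
  by rewrite -ltr_pdivlMr.
have hb K : 0 <= K -> K < rho -> pseries_abs_cvg b K.
  move=> K_ge0 K_lt; apply: series_le_cvg (cvgP l hl) => k.
  - by rewrite mulr_ge0 ?exprn_ge0.
  - by rewrite abs_homog_part_ge0 ?ltW.
  rewrite -(ger0_norm K_ge0) -normrX -normrM mulrC /b -homog_partZ.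
  apply: le_trans (norm_homog_part_le _ (mulr_ge0 K_ge0 (normr_ge0 x)) _) _.
    by move=> i; rewrite mxE normrM (ger0_norm K_ge0) ler_wpM2l // mx_entry_le_norm.
  apply: abs_homog_part_le; first by rewrite mulr_ge0.
  rewrite (le_trans (ler_wpM2l K_ge0 (ler_wpDr ler01 (lexx `|x|)))) //.
  by rewrite -ler_pdivlMr // ltW.
have hg t : `|t| < rho -> V (t *: x) = limn (pseries b t).
  move=> t_lt; apply/esym/cvg_lim => //.
  have -> : pseries b t = series (fun k => homog_part (c k) (t *: x)).
    by apply/funext => N; apply: eq_bigr => k _; rewrite homog_partZ mulrC.
  by rewrite -[X in _ --> V X]add0r; apply: hV; exact: scale_lt.
rewrite /taylor_pol; apply: eq_bigr => k _.
rewrite (derive1n_pseries hb hg) ?normr0 ?divr_gt0 // lim_pseries0.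
by rewrite iter_pseries_diffs0 mulrC mulKf.
Qed.

Lemma taylor_bounded_taylor_pol (V : vec -> R) p :
  analytic_at V 0 -> taylor_bounded (taylor_pol V p).
Proof.
move=> [c [r [r_gt0 hl hV]]].
apply: (eq_taylor_bounded _
  (taylor_bounded_sum _ _ (fun k => taylor_bounded_homog_part (c k)))).
by move=> y; rewrite (taylor_polE r_gt0 hl hV).
Qed.

End HomogeneousParts.

Lemma convex_comb_lt {R : realDomainType} (a b e t : R) : 0 <= t -> t <= 1 ->
  a < e -> b < e -> (1 - t) * a + t * b < e.
Proof.
move=> t_ge0 t_le1 ae be; set m := Num.max a b.
have am : a <= m by rewrite le_max lexx.
have bm : b <= m by rewrite le_max lexx orbT.
have me : m < e by rewrite gt_max ae be.
by apply: le_lt_trans me; nra.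
Qed.

Section AdmissibleSets.
Context {R : realType} {n : nat}.
Local Notation vec := 'rV[R]_n.
Variables (f : vec -> vec) (W : vec -> R).

Lemma admissible_interior_or_level a S x :
  admissible f W a S -> S x -> interior S x \/ W x = a.
Proof.
move=> [[S_closed _ _] [_ S_bd _ _]] Sx.
have [|Sx_N] := pselect (interior S x); [by left | right].
by apply: S_bd; split => //; rewrite -(closure_id S).1.
Qed.

Lemma admissible_le a S x : admissible f W a S -> S x -> W x <= a.
Proof.
move=> hS Sx; have [Sx_int|->//] := admissible_interior_or_level hS Sx.
by apply/ltW; case: hS => _ [+ _ _ _]; apply.
Qed.

Lemma admissible_interior a S x :
  admissible f W a S -> S x -> W x < a -> interior S x.
Proof.
by move=> hS Sx; case: (admissible_interior_or_level hS Sx) => [//|->]; rewrite ltxx.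
Qed.

Lemma admissible_interior_lt a S x : admissible f W a S -> interior S x -> W x < a.
Proof. by case=> _ [+ _ _ _]; apply. Qed.

Lemma admissible_lyapunov a S x : admissible f W a S -> S x -> x != 0 ->
  0 < W x /\ lie_deriv f W x < 0.
Proof.
case=> _ [_ _ _ S_G] Sx x_neq0; have [T [_ _ _ T_lyap Tx]] := S_G x Sx.
exact: T_lyap.
Qed.

Lemma admissible_connected_sub a S (P : set vec) p : admissible f W a S ->
  connected P -> P p -> S p -> (forall z, P z -> W z < a) -> P `<=` S.
Proof.
move=> hS P_conn Pp Sp P_lt; have [[S_closed _ _] _] := hS.
suff PS : P `&` S = P by move=> z; rewrite -PS => -[].
apply: P_conn; first by exists p.
- exists (interior S); first exact: open_interior.
  apply/seteqP; split=> z [Pz Sz]; split=> //; last exact: interior_subset.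
  exact: admissible_interior hS Sz (P_lt z Pz).
- by exists S.
Qed.

Lemma admissible_segment a S (p q : vec) : admissible f W a S -> S p ->
  (forall t : R, 0 <= t -> t <= 1 -> W (p + t *: (q - p)) < a) -> S q.
Proof.
move=> hS Sp seg_lt; set I := [set t : R | 0 <= t /\ t <= 1].
have I_conn : connected I.
  apply/connected_intervalP => x y [x_ge0 _] [_ y_le1] z /andP[xz zy].
  by split; [exact: le_trans xz | exact: le_trans y_le1].
have seg_cont : continuous (fun t : R => p + t *: (q - p)).
  move=> t; apply: (@continuousD _ _ _ (fun _ => p) (fun t : R => t *: (q - p))).
    exact: cst_continuous.
  exact: scalel_continuous.
have P_conn : connected [set p + t *: (q - p) | t in I].
  by apply: connected_continuous_connected I_conn _; exact: continuous_subspaceT.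
apply: (admissible_connected_sub hS P_conn _ Sp) => [|z [t [t0 t1] <-]|].
- by exists 0; [split=> //; exact: ler01 | rewrite scale0r addr0].
- exact: seg_lt.
- by exists 1; [split=> //; exact: ler01 | rewrite scale1r addrC subrK].
Qed.

Lemma star_interior_near A (q : vec) (eta : R) :
  star_property A -> A q -> 0 < eta -> exists2 y, interior A y & `|y - q| < eta.
Proof.
move=> A_star Aq eta_gt0; set d := Num.min 2^-1 (eta / (`|q| + 1)).
have q1_gt0 : 0 < `|q| + 1 by rewrite ltr_wpDl.
have d_gt0 : 0 < d by rewrite lt_min invr_gt0 ltr0n divr_gt0.
have d_half : d <= 2^-1 by rewrite ge_min lexx.
have d_eta : d <= eta / (`|q| + 1) by rewrite ge_min lexx orbT.
exists ((1 - d) *: q); first by apply: A_star => //; lra.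
have -> : (1 - d) *: q - q = - (d *: q) by apply/rowP => i; rewrite !mxE; ring.
rewrite normrN normrZ (ger0_norm (ltW d_gt0)).
apply: le_lt_trans (ler_wpM2r (normr_ge0 q) d_eta) _.
by rewrite mulrAC ltr_pdivrMr // ltr_pM2l // ltrDl.
Qed.

End AdmissibleSets.

Section StarAdmissible.
Context {R : realType} {n : nat}.
Local Notation vec := 'rV[R]_n.
Variables (f : vec -> vec) (W : vec -> R).
Hypothesis W_tb : taylor_bounded W.

(* A minimiser of [W] over [T \ Int S] that lies outside [S] would be a local
   minimiser of [W] on the open set [Int T \ S], where [<grad W, f>] cannot vanish. *)
Lemma admissible_sublevel_mem a b S T y : admissible f W a S -> admissible f W b T ->
  T y -> W y <= a -> W y < b -> S y.
Proof.
move=> hS hT Ty ya yb; apply: contrapT => Sy_N.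
have [[S_closed _ S0] _] := hS; have [_ [_ _ T_compact _]] := hT.
set K := T `&` ~` interior S.
have K_compact : compact K :=
  compact_closedI T_compact (open_closedC (open_interior S)).
have Ky : K y by split => // /interior_subset.
have W_cont : {within K, continuous W}.
  by apply: continuous_subspaceT => x; exact: differentiable_continuous (W_tb.1 x).
have [m Km m_min] := EVT_min_rV (ex_intro _ y Ky) K_compact W_cont.
rewrite inE in Km.
have [z [Kz z_min Sz_N Wz]] : exists z, [/\ K z, forall t, K t -> W z <= W t,
    ~ S z & W z < b].
  have [Wma|aWm] := ltP (W m) a.
  - exists m; split=> //.
    + by move=> t Kt; apply: m_min; rewrite inE.
    + by move=> Sm; apply: Km.2; exact: admissible_interior hS Sm Wma.
    + by apply: le_lt_trans yb; apply: m_min; rewrite inE.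
  - exists y; split=> // t Kt.
    by rewrite (le_trans ya) // (le_trans aWm) // m_min // inE.
have z_int : interior T z := admissible_interior hT Kz.1 Wz.
have : nbhs z (interior T `&` ~` S).
  apply: open_nbhs_nbhs; split => //.
  exact: openI (open_interior T) (closed_openC S_closed).
move=> /nbhs_ballP[e e_gt0 ze].
have z_min_loc x : `|z - x| < e -> W z <= W x.
  move=> zx; have [xT xS] : (interior T `&` ~` S) x by apply: ze; rewrite -ball_normE.
  by apply: z_min; split; [exact: interior_subset | move/interior_subset].
have z_neq0 : z != 0.
  by apply/eqP => z0; apply: Sz_N; rewrite z0; exact: interior_subset.
have [_] := admissible_lyapunov hT Kz.1 z_neq0.
by rewrite /lie_deriv (diff_local_min (f z) W_tb.1 e_gt0 z_min_loc) ltxx.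
Qed.

Lemma admissible_boundary_flow c A q : admissible f W c A -> A q -> ~ interior A q ->
  exists eta s beta : R, [/\ 0 < eta, 0 < s, 0 < beta,
    forall y u, `|y - q| < eta -> 0 <= u -> u <= s ->
      W (y + u *: f q) <= W y - u * beta
    & forall z, `|z - (q + s *: f q)| < eta -> W z < c].
Proof.
move=> hA Aq q_bd.
have Wq : W q = c by case: (admissible_interior_or_level hA Aq).
have q_neq0 : q != 0 by apply/eqP => q0; apply: q_bd; rewrite q0; case: hA => -[].
have [_ dWq] := admissible_lyapunov hA Aq q_neq0.
have [eta1 [s [beta [eta1_gt0 s_gt0 beta_gt0 descent]]]] :=
  taylor_bounded_descent W_tb dWq.
have Wqs : W (q + s *: f q) < c.
  have := descent q s; rewrite subrr normr0 Wq => /(_ eta1_gt0 (ltW s_gt0) (lexx s)).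
  by have := mulr_gt0 s_gt0 beta_gt0; lra.
have : nbhs (q + s *: f q) [set z | W z < c].
  exact: (@cvgr_lt R _ _ _ W _ (differentiable_continuous (W_tb.1 _)) _ Wqs).
move=> /nbhs_ballP[eta2 eta2_gt0 qs_lt].
exists (Num.min eta1 eta2), s, beta; split=> //; first by rewrite lt_min eta1_gt0.
- move=> y u yq; apply: descent; apply: lt_le_trans yq _.
  by rewrite ge_min lexx.
- move=> z zqs; apply: qs_lt; rewrite -ball_normE /ball_ /= distrC.
  by apply: lt_le_trans zqs _; rewrite ge_min lexx orbT.
Qed.

(* Near a boundary point [q], the points of the sublevel set are reached from
   a point of [Int A] given by the star property, by pushing along [f q],
   sliding across, and descending back along [f q]. *)
Lemma admissible_star_boundary_near c A q : admissible f W c A ->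
  star_property A -> A q -> ~ interior A q ->
  exists2 eta : R, 0 < eta & forall h, W h <= c -> `|h - q| < eta -> A h.
Proof.
move=> hA A_star Aq q_bd; have [[A_closed _ _] _] := hA.
have [eta [s [beta [eta_gt0 s_gt0 beta_gt0 descent across]]]] :=
  admissible_boundary_flow hA Aq q_bd.
set v := f q; exists eta => // h Wh hq.
have [y0 y0_int y0q] := star_interior_near A_star Aq eta_gt0.
have A_y0s : A (y0 + s *: v).
  apply: (admissible_segment hA (interior_subset y0_int)) => t t0 t1.
  have -> : y0 + t *: (y0 + s *: v - y0) = y0 + (t * s) *: v.
    by apply/rowP => i; rewrite !mxE; ring.
  have ts_ge0 := mulr_ge0 t0 (ltW s_gt0).
  have := descent y0 _ y0q ts_ge0 (ler_piMl (ltW s_gt0) t1).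
  have := mulr_ge0 ts_ge0 (ltW beta_gt0).
  by have := admissible_interior_lt hA y0_int; lra.
have A_hs : A (h + s *: v).
  apply: (admissible_segment hA A_y0s) => t t0 t1; apply: across.
  have -> : y0 + s *: v + t *: (h + s *: v - (y0 + s *: v)) - (q + s *: v)
      = (1 - t) *: (y0 - q) + t *: (h - q) by apply/rowP => i; rewrite !mxE; ring.
  apply: le_lt_trans (ler_normD _ _) _.
  rewrite !normrZ (ger0_norm t0) ger0_norm ?subr_ge0 //.
  exact: convex_comb_lt.
apply: (closed_ray_mem (v := v) A_closed s_gt0) => u u_gt0 us.
apply: (admissible_segment hA A_hs) => t t0 t1.
have -> : h + s *: v + t *: (h + u *: v - (h + s *: v)) = h + (s + t * (u - s)) *: v.
  by apply/rowP => i; rewrite !mxE; ring.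
have u_le : u <= s + t * (u - s) by nra.
have le_s : s + t * (u - s) <= s by nra.
have := descent h _ hq (ltW (lt_le_trans u_gt0 u_le)) le_s.
by have := mulr_gt0 (lt_le_trans u_gt0 u_le) beta_gt0; lra.
Qed.

Lemma admissible_star_near c A q : admissible f W c A -> star_property A -> A q ->
  exists2 eta : R, 0 < eta & forall h, W h <= c -> `|h - q| < eta -> A h.
Proof.
move=> hA A_star Aq; have [q_int|q_bd] := pselect (interior A q); last first.
  exact: admissible_star_boundary_near.
have /nbhs_ballP[e e_gt0 qe] : nbhs q (interior A).
  by apply: open_nbhs_nbhs; split => //; exact: open_interior.
exists e => // h _ hq; apply: interior_subset; apply: qe.
by rewrite -ball_normE /ball_ /= distrC.
Qed.

(* [N `&` A] is clopen in the connected set [N]: closed as [A] is, and open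
   because near each point of [A] every point where [W <= c] lies in [A]. *)
Lemma admissible_sub_star c N A : admissible f W c N -> admissible f W c A ->
  star_property A -> N `<=` A.
Proof.
move=> hN hA A_star; have [[_ N_conn N0] _] := hN; have [[A_closed _ A0] _] := hA.
set O := [set x | exists q (eta : R), [/\ A q, 0 < eta,
  forall h, W h <= c -> `|h - q| < eta -> A h & `|x - q| < eta]].
have O_open : open O.
  rewrite openE => x [q [eta [Aq eta_gt0 q_near xq]]].
  apply/nbhs_ballP; exists (eta - `|x - q|); first by rewrite /= subr_gt0.
  move=> z; rewrite -ball_normE /ball_ /= => xz; exists q, eta; split=> //.
  rewrite -(subrK x z) -addrA (le_lt_trans (ler_normD _ _)) //.
  by rewrite -ltrBrDr distrC.
suff NA : N `&` A = N by move=> x; rewrite -NA => -[].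
apply: N_conn.
- by exists 0; split; exact: interior_subset.
- exists O => //; apply/seteqP; split=> x [Nx Ax]; split=> //.
    have [eta eta_gt0 x_near] := admissible_star_near hA A_star Ax.
    by exists x, eta; rewrite subrr normr0.
  by case: Ax => q [eta [_ _ q_near xq]]; exact: q_near (admissible_le hN Nx) xq.
- by exists A.
Qed.

Lemma admissible_star_radial_lt c A x l1 l2 :
  admissible f W c A -> star_property A ->
  (forall c', 0 < c' -> c' <= c ->
     exists N', admissible f W c' N' /\ star_property N') ->
  A x -> x != 0 -> 0 <= l1 -> l1 < l2 -> l2 <= 1 -> W (l1 *: x) < W (l2 *: x).
Proof.
move=> hA A_star hstar Ax x_neq0 l1_ge0 l12 l2_le1.
have l2_gt0 : 0 < l2 := le_lt_trans l1_ge0 l12.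
set z := l2 *: x.
have Az : A z.
  have [l2_eq1|l2_neq1] := eqVneq l2 1; first by rewrite /z l2_eq1 scale1r.
  apply: interior_subset (A_star x Ax l2 (ltW l2_gt0) _).
  by rewrite lt_neqAle l2_neq1.
have z_neq0 : z != 0 by rewrite scaler_eq0 negb_or x_neq0 gt_eqF.
have [Wz_gt0 _] := admissible_lyapunov hA Az z_neq0.
set l := l1 / l2.
have l_ge0 : 0 <= l by rewrite divr_ge0 // ltW.
have l_lt1 : l < 1 by rewrite ltr_pdivrMr // mul1r.
have -> : l1 *: x = l *: z by rewrite /z scalerA (divfK (lt0r_neq0 l2_gt0)).
have [Wz_lt|Wz_ge] := ltP (W z) c.
  have [S [hS S_star]] := hstar (W z) Wz_gt0 (ltW Wz_lt).
  have Sz := admissible_sublevel_mem hS hA Az (lexx _) Wz_lt.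
  exact: admissible_interior_lt hS (S_star z Sz l l_ge0 l_lt1).
have -> : W z = c by apply/eqP; rewrite eq_le (admissible_le hA Az) Wz_ge.
exact: admissible_interior_lt hA (A_star z Az l l_ge0 l_lt1).
Qed.

End StarAdmissible.

Unset Implicit Arguments.

Theorem theorem2p6 (R : realType) (n : nat)
    (f : 'rV[R]_n -> 'rV[R]_n) (V : 'rV[R]_n -> R) (U : set 'rV[R]_n)
    (p : nat) (c : R) (N : set 'rV[R]_n) :
  (forall i : 'I_n, analytic_on (fun x => f x 0 i) setT) ->
  f 0 = 0 ->
  hurwitz ('J f 0) ->
  open U -> U 0 -> analytic_on V U -> V 0 = 0 ->
  (forall x, U x -> lie_deriv f V x = - sqnorm x) ->
  (2 <= p)%N -> 0 < c ->
  admissible f (taylor_pol V p) c N ->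
  (forall c' : R, 0 < c' -> c' <= c ->
     exists N' : set 'rV[R]_n,
       admissible f (taylor_pol V p) c' N' /\ star_property N') ->
  forall x : 'rV[R]_n, N x -> x != 0 ->
  forall l1 l2 : R, 0 <= l1 -> l1 < l2 -> l2 <= 1 ->
    taylor_pol V p (l1 *: x) < taylor_pol V p (l2 *: x).
Proof.
move=> _ _ _ _ U0 V_an _ _ _ c_gt0 hN hstar x Nx x_neq0 l1 l2 l1_ge0 l12 l2_le1.
have Vp_tb := taylor_bounded_taylor_pol p (V_an 0 U0).
have [A [hA A_star]] := hstar c c_gt0 (lexx c).
have NA := admissible_sub_star Vp_tb hN hA A_star.
exact: (admissible_star_radial_lt Vp_tb hA A_star hstar (NA x Nx) x_neq0
  l1_ge0 l12 l2_le1).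
Qed.
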